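(* Each of the following classes has superSAP (with respect to its binary relation) and the joint embedding property; moreover, in each case the class of finite members has a Fraïssé limit, provided the index sets $F$ and $G$ below are finite. (1) The classes of (a) partially ordered sets, (b) preordered sets, (c) undirected graphs (sets with a symmetric antireflexive binary relation), (d) directed graphs (sets with an antireflexive binary relation), (e) sets with an equivalence relation, (f) sets with a transitive binary relation, (g) sets with a symmetric reflexive binary relation (a tolerance), in each case even after adding an $F$-indexed family of unary operations $f$ that are relation-preserving ($x\,R\,y \Rightarrow f(x)\,R\,f(y)$) and a $G$-indexed family of unary operations $g$ that are relation-reversing ($x\,R\,y \Rightarrow g(y)\,R\,g(x)$). (2) The class of partially ordered sets with further families of order preserving, order reversing, strict order preserving and strict order reversing unary operations.
   Context: A function $f$ on a poset is strict order preserving if $a<b$ implies $f(a)<f(b)$, and strict order reversing if $a<b$ implies $f(b)<f(a)$, where $a<b$ means $a\le b$ and $a\ne b$. All classes are closed under isomorphism. For a triple $\mathbf{A},\mathbf{B},\mathbf{C}$ in the class with $\mathbf{C}\subseteq\mathbf{A}$, $\mathbf{C}\subseteq\mathbf{B}$ and $C=A\cap B$, SAP asks for $\mathbf{D}$ in the class with $\mathbf{A},\mathbf{B}\subseteq\mathbf{D}$; superSAP with respect to $R$ further requires that for $a\in A\setminus B$, $b\in B\setminus A$: if $a\,R_{\mathbf{D}}\,b$ then $a\,R_{\mathbf{A}}\,c\,R_{\mathbf{B}}\,b$ for some $c\in C$, and if $b\,R_{\mathbf{D}}\,a$ then $b\,R_{\mathbf{B}}\,c\,R_{\mathbf{A}}\,a$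 for some $c\in C$. The joint embedding property (JEP): for all $\mathbf{A},\mathbf{B}$ in the class there are $\mathbf{D}$ in the class and embeddings of $\mathbf{A}$ and $\mathbf{B}$ into $\mathbf{D}$. A Fraïssé limit of a class of finitely generated structures in a countable language is a countable ultrahomogeneous structure whose age is that class. *)

From Stdlib Require Import List.
Import ListNotations.
Set Implicit Arguments.

Record struct (I : Type) := Struct {
  carrier :> Type;
  rel : carrier -> carrier -> Prop;
  op : I -> carrier -> carrier }.
Arguments rel {I} s _ _.
Arguments op {I} s _ _.

Definition embedding {I} {A B : struct I} (h : A -> B) : Prop :=
  (forall x y, h x = h y -> x = y) /\
  (forall x y, rel A x y <-> rel B (h x) (h y)) /\
  (forall i x, h (op A i x) = op B i (h x)).

Definition isomorphism {I} {A B : struct I} (h : A -> B) : Prop :=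
  embedding h /\ (forall y, exists x, h x = y).

(** superSAP w.r.t. [rel], with C ⊆ A, C ⊆ B, A ∩ B = C, A,B ⊆ D rendered
    via embeddings; the disjointness clause expresses A ∩ B = C inside D. *)
Definition superSAP {I} (K : struct I -> Prop) : Prop :=
  forall (A B C : struct I) (eA : C -> A) (eB : C -> B),
    K A -> K B -> K C -> embedding eA -> embedding eB ->
    exists (D : struct I) (hA : A -> D) (hB : B -> D),
      K D /\ embedding hA /\ embedding hB /\
      (forall c, hA (eA c) = hB (eB c)) /\
      (forall a b, hA a = hB b -> exists c, eA c = a /\ eB c = b) /\
      (forall a b, (forall c, eA c <> a) -> (forall c, eB c <> b) ->
         rel D (hA a) (hB b) -> exists c, rel A a (eA c) /\ rel B (eB c) b) /\
      (forall a b, (forall c, eA c <> a) -> (forall c, eB c <> b) ->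
         rel D (hB b) (hA a) -> exists c, rel B b (eB c) /\ rel A (eA c) a).

Definition JEP {I} (K : struct I -> Prop) : Prop :=
  forall A B : struct I, K A -> K B ->
    exists (D : struct I) (f : A -> D) (g : B -> D),
      K D /\ embedding f /\ embedding g.

Definition finite_type (T : Type) : Prop := exists l : list T, forall x, In x l.
Definition countable_type (T : Type) : Prop :=
  exists f : T -> nat, forall x y, f x = f y -> x = y.

Definition op_closed {I} {M : struct I} (S : M -> Prop) : Prop :=
  forall i x, S x -> S (op M i x).

Definition generated {I} {M : struct I} (l : list M) (x : M) : Prop :=
  forall S, op_closed S -> (forall y, In y l -> S y) -> S x.

Lemma generated_closed {I} {M : struct I} (l : list M) :
  op_closed (generated l).
Proof. intros i x Hx S HS Hl. apply HS. exact (Hx S HS Hl). Defined.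

Definition gen_struct {I} {M : struct I} (l : list M) : struct I :=
  {| carrier := { x : M | generated l x };
     rel := fun x y => rel M (proj1_sig x) (proj1_sig y);
     op := fun i x => exist _ (op M i (proj1_sig x))
                        (@generated_closed I M l i _ (proj2_sig x)) |}.

Definition ultrahomogeneous {I} (M : struct I) : Prop :=
  forall (l1 l2 : list M) (phi : gen_struct l1 -> gen_struct l2),
    isomorphism phi ->
    exists sigma : M -> M, isomorphism sigma /\
      forall x, sigma (proj1_sig x) = proj1_sig (phi x).

Definition age_is {I} (M : struct I) (K : struct I -> Prop) : Prop :=
  (forall l : list M, exists A, K A /\ exists h : gen_struct l -> A, isomorphism h) /\
  (forall A, K A -> exists h : A -> M, embedding h).

Definition fraisse_limit {I} (K : struct I -> Prop) (M : struct I) : Prop :=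
  countable_type M /\ ultrahomogeneous M /\ age_is M K.

Definition finite_members {I} (K : struct I -> Prop) (A : struct I) : Prop :=
  K A /\ finite_type A.

Inductive relkind := Poset | Preorder | Graph | Digraph | Equivalence
                   | TransRel | Tolerance.

Definition rel_axioms (k : relkind) (T : Type) (R : T -> T -> Prop) : Prop :=
  match k with
  | Poset => (forall x, R x x) /\ (forall x y, R x y -> R y x -> x = y) /\
             (forall x y z, R x y -> R y z -> R x z)
  | Preorder => (forall x, R x x) /\ (forall x y z, R x y -> R y z -> R x z)
  | Graph => (forall x y, R x y -> R y x) /\ (forall x, ~ R x x)
  | Digraph => forall x, ~ R x x
  | Equivalence => (forall x, R x x) /\ (forall x y, R x y -> R y x) /\
             (forall x y z, R x y -> R y z -> R x z)
  | TransRel => forall x y z, R x y -> R y z -> R x z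
  | Tolerance => (forall x y, R x y -> R y x) /\ (forall x, R x x)
  end.

Definition class1 (k : relkind) (F G : Type) (A : struct (F + G)) : Prop :=
  rel_axioms k (rel A) /\
  (forall f x y, rel A x y -> rel A (op A (inl f) x) (op A (inl f) y)) /\
  (forall g x y, rel A x y -> rel A (op A (inr g) y) (op A (inr g) x)).

Definition strict {T} (R : T -> T -> Prop) (x y : T) : Prop := R x y /\ x <> y.

Definition class2 (F1 F2 F3 F4 : Type) (A : struct (((F1 + F2) + F3) + F4)) : Prop :=
  rel_axioms Poset (rel A) /\
  (forall f x y, rel A x y -> rel A (op A (inl (inl (inl f))) x) (op A (inl (inl (inl f))) y)) /\
  (forall f x y, rel A x y -> rel A (op A (inl (inl (inr f))) y) (op A (inl (inl (inr f))) x)) /\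
  (forall f x y, strict (rel A) x y ->
     strict (rel A) (op A (inl (inr f)) x) (op A (inl (inr f)) y)) /\
  (forall f x y, strict (rel A) x y ->
     strict (rel A) (op A (inr f) y) (op A (inr f) x)).
Arguments class1 k F G A : clear implicits.
Arguments class2 F1 F2 F3 F4 A : clear implicits.

(** The amalgam of [A] and [B] over [C] is their disjoint union over [C], carrying the
    relations of [A] and [B] together with, when the class is transitive, their composites
    through [C]; operations act on the new elements of [B] as in [B]. A new element of [A] and
    one of [B] are therefore related only through [C], which is superSAP; every axiom of the
    classes survives, and amalgamating over the empty structure gives JEP.
    Over a finite signature the finite members can be coded by lists of naturals, so a chain
    of finite members carried by finite sets of naturals can attempt every amalgamation task
    at arbitrarily late stages. Its union is locally finite, has the extension property, and
    is ultrahomogeneous by back and forth. *)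

From Stdlib Require Import List Bool Arith Lia Relation_Definitions Cantor.
From Stdlib Require Import Classical ClassicalEpsilon ProofIrrelevance.
Import ListNotations.
Set Implicit Arguments.

Definition choose {X : Type} {P : X -> Prop} (H : exists x, P x) : X :=
  proj1_sig (constructive_indefinite_description P H).

Lemma choose_spec {X : Type} {P : X -> Prop} (H : exists x, P x) : P (choose H).
Proof. exact (proj2_sig (constructive_indefinite_description P H)). Qed.

Notation EM := excluded_middle_informative.

Lemma sig_ext {X : Type} {P : X -> Prop} (x y : sig P) : proj1_sig x = proj1_sig y -> x = y.
Proof. destruct x as [x p], y as [y q]; simpl; intros ->. f_equal. apply proof_irrelevance. Qed.

Lemma finite_of_injection (X : Type) (g : X -> nat) (L : list nat) :
  (forall x y, g x = g y -> x = y) -> (forall x, In (g x) L) -> finite_type X.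
Proof.
  intros Hinj HL.
  exists (flat_map (fun n => match EM (exists x, g x = n) with
                            | left H => [choose H] | right _ => [] end) L).
  intro x. apply in_flat_map. exists (g x). split; [apply HL|].
  destruct (EM _) as [H|H].
  - left. apply Hinj, (choose_spec H).
  - exfalso; eauto.
Qed.

Lemma finite_of_surjection (X Y : Type) (f : X -> Y) :
  (forall y, exists x, f x = y) -> finite_type X -> finite_type Y.
Proof.
  intros Hf [L HL]. exists (map f L). intro y.
  destruct (Hf y) as [x <-]. apply in_map, HL.
Qed.

Lemma finite_sum X Y : finite_type X -> finite_type Y -> finite_type (X + Y).
Proof.
  intros [LX HX] [LY HY]. exists (map inl LX ++ map inr LY).
  intros [x|y]; apply in_or_app; [left|right]; apply in_map; auto.
Qed.

Lemma finite_subset (P : nat -> Prop) (L : list nat) :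
  (forall n, P n -> In n L) -> exists L', forall n, P n <-> In n L'.
Proof.
  intros HL. exists (filter (fun n => if EM (P n) then true else false) L).
  intro n. rewrite filter_In. destruct (EM (P n)) as [p|p]; split.
  - intros _. auto.
  - tauto.
  - intro Hn. contradiction.
  - intros [_ E]. discriminate.
Qed.

Lemma list_bound (L : list nat) : exists b, forall n, In n L -> n < b.
Proof.
  exists (S (list_max L)). intros n Hn.
  assert (H : list_max L <= list_max L) by reflexivity.
  apply list_max_le, Forall_forall with (x := n) in H; [lia|exact Hn].
Qed.

Fixpoint index_of {X : Type} (x : X) (L : list X) : nat :=
  match L with
  | [] => 0
  | y :: L' => if EM (x = y) then 0 else S (index_of x L')
  end.

Lemma index_of_inj {X : Type} (L : list X) x y :
  In x L -> In y L -> index_of x L = index_of y L -> x = y.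
Proof.
  induction L as [|z L IH]; simpl; [tauto|].
  intros Hx Hy. destruct (EM (x = z)) as [->|Nx]; destruct (EM (y = z)) as [->|Ny];
    try discriminate; [reflexivity|].
  intro E. injection E as E. apply IH; auto.
  - destruct Hx; [congruence|auto].
  - destruct Hy; [congruence|auto].
Qed.

Definition enumerable (X : Type) : Prop := exists g : nat -> X, forall x, exists n, g n = x.

Lemma enumerable_nat : enumerable nat.
Proof. exists (fun n => n). eauto. Qed.

Lemma enumerable_prod X Y : enumerable X -> enumerable Y -> enumerable (X * Y).
Proof.
  intros [gx Hx] [gy Hy].
  exists (fun n => let (a, b) := of_nat n in (gx a, gy b)).
  intros [x y]. destruct (Hx x) as [a <-], (Hy y) as [b <-].
  exists (to_nat (a, b)). rewrite cancel_of_to. reflexivity.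
Qed.

(** The [fuel] only makes the recursion structural. *)
Fixpoint decode_list {X : Type} (g : nat -> X) (fuel n : nat) : list X :=
  match fuel, n with
  | S fuel', S m => let (a, n') := of_nat m in g a :: decode_list g fuel' n'
  | _, _ => []
  end.

Lemma enumerable_list X : enumerable X -> enumerable (list X).
Proof.
  intros [g Hg].
  assert (H : forall l, exists fuel n, decode_list g fuel n = l).
  { induction l as [|x l [fuel [n IH]]]; [exists 0, 0; reflexivity|].
    destruct (Hg x) as [a <-]. exists (S fuel), (S (to_nat (a, n))).
    cbn [decode_list]. rewrite cancel_of_to, IH. reflexivity. }
  exists (fun k => let (fuel, n) := of_nat k in decode_list g fuel n).
  intro l. destruct (H l) as [fuel [n E]].
  exists (to_nat (fuel, n)). rewrite cancel_of_to. exact E.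
Qed.

Definition preserving {T} (R : relation T) (f : T -> T) : Prop :=
  forall x y, R x y -> R (f x) (f y).

Definition reversing {T} (R : relation T) (f : T -> T) : Prop :=
  forall x y, R x y -> R (f y) (f x).

Definition irreflexive {T} (R : relation T) : Prop := forall x, ~ R x x.

Lemma strict_transitive {T} (R : relation T) :
  transitive _ R -> antisymmetric _ R -> transitive _ (strict R).
Proof.
  intros Ht Ha x y z [Hxy Nxy] [Hyz Nyz]. split; [exact (Ht _ _ _ Hxy Hyz)|].
  intros ->. exact (Nxy (Ha _ _ Hxy Hyz)).
Qed.

Section Embedding.
Variables (I : Type) (A B : struct I) (h : A -> B).
Hypothesis Hh : embedding h.

Lemma embedding_inj x y : h x = h y -> x = y.
Proof. exact (proj1 Hh x y). Qed.

Lemma embedding_rel x y : rel A x y <-> rel B (h x) (h y).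
Proof. exact (proj1 (proj2 Hh) x y). Qed.

Lemma embedding_op i x : h (op A i x) = op B i (h x).
Proof. exact (proj2 (proj2 Hh) i x). Qed.

Lemma embedding_strict x y : strict (rel A) x y <-> strict (rel B) (h x) (h y).
Proof.
  unfold strict. rewrite embedding_rel.
  split; intros [Hxy Hne]; split; auto; intro E.
  - exact (Hne (embedding_inj E)).
  - subst; auto.
Qed.

Lemma reflexive_embedding : reflexive _ (rel B) -> reflexive _ (rel A).
Proof. intros HB x. apply embedding_rel, HB. Qed.

Lemma irreflexive_embedding : irreflexive (rel B) -> irreflexive (rel A).
Proof. intros HB x Hx. exact (HB _ (proj1 (embedding_rel x x) Hx)). Qed.

Lemma symmetric_embedding : symmetric _ (rel B) -> symmetric _ (rel A).
Proof. intros HB x y Hxy. apply embedding_rel, HB, embedding_rel, Hxy. Qed.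

Lemma transitive_embedding : transitive _ (rel B) -> transitive _ (rel A).
Proof.
  intros HB x y z Hxy Hyz. rewrite embedding_rel in *. exact (HB _ _ _ Hxy Hyz).
Qed.

Lemma antisymmetric_embedding : antisymmetric _ (rel B) -> antisymmetric _ (rel A).
Proof.
  intros HB x y Hxy Hyx. rewrite embedding_rel in *. exact (embedding_inj (HB _ _ Hxy Hyx)).
Qed.

Lemma preserving_embedding i : preserving (rel B) (op B i) -> preserving (rel A) (op A i).
Proof. intros HB x y Hxy. rewrite embedding_rel, !embedding_op in *. auto. Qed.

Lemma reversing_embedding i : reversing (rel B) (op B i) -> reversing (rel A) (op A i).
Proof. intros HB x y Hxy. rewrite embedding_rel, !embedding_op in *. auto. Qed.

Lemma strict_preserving_embedding i :
  preserving (strict (rel B)) (op B i) -> preserving (strict (rel A)) (op A i).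
Proof. intros HB x y Hxy. rewrite embedding_strict, !embedding_op in *. auto. Qed.

Lemma strict_reversing_embedding i :
  reversing (strict (rel B)) (op B i) -> reversing (strict (rel A)) (op A i).
Proof. intros HB x y Hxy. rewrite embedding_strict, !embedding_op in *. auto. Qed.

End Embedding.

Arguments embedding_inj {I A B h} Hh {x y}.

Lemma embedding_comp {I : Type} (A B C : struct I) (f : A -> B) (g : B -> C) :
  embedding f -> embedding g -> embedding (fun x => g (f x)).
Proof.
  intros Hf Hg. split; [|split].
  - intros x y E. exact (embedding_inj Hf (embedding_inj Hg E)).
  - intros x y. rewrite (embedding_rel Hf), (embedding_rel Hg). tauto.
  - intros i x. rewrite (embedding_op Hf), (embedding_op Hg). reflexivity.
Qed.

Lemma isomorphism_inv {I : Type} (A B : struct I) (f : A -> B) :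
  isomorphism f -> exists g : B -> A, embedding g.
Proof.
  intros [Hf Hsurj]. exists (fun y => choose (Hsurj y)).
  assert (Hfg : forall y, f (choose (Hsurj y)) = y) by (intro y; exact (choose_spec (Hsurj y))).
  split; [|split].
  - intros x y E. rewrite <- (Hfg x), <- (Hfg y), E. reflexivity.
  - intros x y. rewrite (embedding_rel Hf), !Hfg. tauto.
  - intros i y. apply (embedding_inj Hf). rewrite Hfg, (embedding_op Hf), Hfg. reflexivity.
Qed.

Lemma generated_In {I} {M : struct I} {l : list M} {x} : In x l -> generated l x.
Proof. intros Hx S _ Hl. exact (Hl x Hx). Qed.

Lemma gen_struct_incl_embedding {I} {M : struct I} (l : list M) :
  embedding (fun x : gen_struct l => proj1_sig x).
Proof.
  split; [|split].
  - intros x y. apply sig_ext.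
  - reflexivity.
  - reflexivity.
Qed.

(** * Free amalgamation *)

Section Amalgam.
Variables (I : Type) (A B C : struct I) (eA : C -> A) (eB : C -> B).
Hypotheses (HeA : embedding eA) (HeB : embedding eB).
Variable compose : bool.
Hypothesis transA : compose = true -> transitive _ (rel A).
Hypothesis transB : compose = true -> transitive _ (rel B).

Definition amalg_carrier : Type := (A + {b : B | forall c, eB c <> b})%type.

Definition inA (a : A) : amalg_carrier := inl a.

Definition inB (b : B) : amalg_carrier :=
  match EM (exists c, eB c = b) with
  | left H => inl (eA (choose H))
  | right H => inr (exist _ b (fun c E => H (ex_intro _ c E)))
  end.

Lemma inB_eB c : inB (eB c) = inA (eA c).
Proof.
  unfold inB. destruct (EM _) as [H|H].
  - rewrite (embedding_inj HeB (choose_spec H)). reflexivity.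
  - exfalso; eauto.
Qed.

Lemma inB_new b (p : forall c, eB c <> b) : inB b = inr (exist _ b p).
Proof.
  unfold inB. destruct (EM _) as [[c H]|H].
  - exfalso; exact (p c H).
  - do 2 f_equal. apply proof_irrelevance.
Qed.

Lemma in_eB_dec b : (exists c, eB c = b) \/ exists p, inB b = inr (exist _ b p).
Proof.
  destruct (classic (exists c, eB c = b)) as [H|H]; [left; exact H|right].
  assert (p : forall c, eB c <> b) by (intros c E; eauto).
  exists p. apply inB_new.
Qed.

Lemma inA_inj {x y} : inA x = inA y -> x = y.
Proof. intro E; injection E; auto. Qed.

Lemma inA_eq_inB a b : inA a = inB b -> exists c, eA c = a /\ eB c = b.
Proof.
  destruct (in_eB_dec b) as [[c <-]|[p ->]]; [|discriminate].
  rewrite inB_eB. intro E. exists c. split; [symmetry; apply inA_inj, E|reflexivity].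
Qed.

Lemma inB_inj {x y} : inB x = inB y -> x = y.
Proof.
  destruct (in_eB_dec x) as [[c <-]|[p ->]]; destruct (in_eB_dec y) as [[d <-]|[q ->]].
  - rewrite !inB_eB. intro E. rewrite (embedding_inj HeA (inA_inj E)). reflexivity.
  - rewrite inB_eB. discriminate.
  - rewrite inB_eB. discriminate.
  - intro E. injection E. auto.
Qed.

Lemma amalg_cases (u : amalg_carrier) : (exists a, u = inA a) \/ (exists b, u = inB b).
Proof.
  destruct u as [a|[b p]]; [left; exists a; reflexivity|].
  right; exists b. rewrite (inB_new p). reflexivity.
Qed.

Definition amalg_op (i : I) (u : amalg_carrier) : amalg_carrier :=
  match u with
  | inl a => inA (op A i a)
  | inr b => inB (op B i (proj1_sig b))
  end.

Lemma amalg_op_inB i b : amalg_op i (inB b) = inB (op B i b).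
Proof.
  destruct (in_eB_dec b) as [[c <-]|[p ->]]; [|reflexivity].
  rewrite inB_eB. simpl. rewrite <- (embedding_op HeA), <- (embedding_op HeB), inB_eB.
  reflexivity.
Qed.

(** [compose] is set for transitive classes: without the composites through [C] the
    amalgam of transitive relations would not be transitive. *)
Inductive amalg_rel : relation amalg_carrier :=
  | amalg_relA {x y} : rel A x y -> amalg_rel (inA x) (inA y)
  | amalg_relB {x y} : rel B x y -> amalg_rel (inB x) (inB y)
  | amalg_relAB {x c y} : compose = true -> rel A x (eA c) -> rel B (eB c) y ->
      amalg_rel (inA x) (inB y)
  | amalg_relBA {y c x} : compose = true -> rel B y (eB c) -> rel A (eA c) x ->
      amalg_rel (inB y) (inA x).

Definition amalg : struct I := {| carrier := amalg_carrier; rel := amalg_rel; op := amalg_op |}.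

Lemma amalg_rel_min (S : relation amalg_carrier) :
  (forall x y, rel A x y -> S (inA x) (inA y)) ->
  (forall x y, rel B x y -> S (inB x) (inB y)) ->
  (compose = true -> transitive _ S) ->
  forall u v, amalg_rel u v -> S u v.
Proof.
  intros SA SB St u v [x y H|x y H|x c y Hc H1 H2|y c x Hc H1 H2]; auto.
  - apply (St Hc _ (inA (eA c))); [auto|rewrite <- inB_eB; auto].
  - apply (St Hc _ (inB (eB c))); [auto|rewrite inB_eB; auto].
Qed.

Lemma rel_eA_eB c d : rel A (eA c) (eA d) <-> rel B (eB c) (eB d).
Proof. rewrite <- (embedding_rel HeA), <- (embedding_rel HeB). reflexivity. Qed.

Lemma inA_rel x y : amalg_rel (inA x) (inA y) <-> rel A x y.
Proof.
  split; [|apply amalg_relA].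
  intro H. remember (inA x) as u eqn:Hu. remember (inA y) as v eqn:Hv.
  destruct H as [x' y' H|x' y' H|x' c y' Hc H1 H2|y' c x' Hc H1 H2].
  - rewrite <- (inA_inj Hu), <- (inA_inj Hv). exact H.
  - apply eq_sym, inA_eq_inB in Hu as [c [<- <-]].
    apply eq_sym, inA_eq_inB in Hv as [d [<- <-]]. apply rel_eA_eB, H.
  - rewrite <- (inA_inj Hu). apply eq_sym, inA_eq_inB in Hv as [d [<- <-]].
    apply (transA Hc _ _ _ H1), rel_eA_eB, H2.
  - rewrite <- (inA_inj Hv). apply eq_sym, inA_eq_inB in Hu as [d [<- <-]].
    apply (transA Hc _ (eA c)); [apply rel_eA_eB, H1|exact H2].
Qed.

Lemma inB_rel x y : amalg_rel (inB x) (inB y) <-> rel B x y.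
Proof.
  split; [|apply amalg_relB].
  intro H. remember (inB x) as u eqn:Hu. remember (inB y) as v eqn:Hv.
  destruct H as [x' y' H|x' y' H|x' c y' Hc H1 H2|y' c x' Hc H1 H2].
  - apply inA_eq_inB in Hu as [c [<- <-]]. apply inA_eq_inB in Hv as [d [<- <-]].
    apply rel_eA_eB, H.
  - rewrite <- (inB_inj Hu), <- (inB_inj Hv). exact H.
  - rewrite <- (inB_inj Hv). apply inA_eq_inB in Hu as [d [<- <-]].
    apply (transB Hc _ (eB c)); [apply rel_eA_eB, H1|exact H2].
  - rewrite <- (inB_inj Hu). apply inA_eq_inB in Hv as [d [<- <-]].
    apply (transB Hc _ _ _ H1), rel_eA_eB, H2.
Qed.

Lemma inA_embedding : @embedding I A amalg inA.
Proof.
  split; [intros x y; apply inA_inj|split; [|reflexivity]].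
  intros x y. symmetry. apply inA_rel.
Qed.

Lemma inB_embedding : @embedding I B amalg inB.
Proof.
  split; [intros x y; apply inB_inj|split].
  - intros x y. symmetry. apply inB_rel.
  - intros i x. symmetry. apply amalg_op_inB.
Qed.

Lemma amalg_rel_inA_inB a b : (forall c, eA c <> a) -> (forall c, eB c <> b) ->
  amalg_rel (inA a) (inB b) -> exists c, rel A a (eA c) /\ rel B (eB c) b.
Proof.
  intros Na Nb H. remember (inA a) as u eqn:Hu. remember (inB b) as v eqn:Hv.
  destruct H as [x y H|x y H|x c y Hc H1 H2|y c x Hc H1 H2].
  - apply inA_eq_inB in Hv as [c [_ E]]. destruct (Nb c E).
  - apply eq_sym, inA_eq_inB in Hu as [c [E _]]. destruct (Na c E).
  - rewrite <- (inA_inj Hu), <- (inB_inj Hv). eauto.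
  - apply eq_sym, inA_eq_inB in Hu as [d [E _]]. destruct (Na d E).
Qed.

Lemma amalg_rel_inB_inA a b : (forall c, eA c <> a) -> (forall c, eB c <> b) ->
  amalg_rel (inB b) (inA a) -> exists c, rel B b (eB c) /\ rel A (eA c) a.
Proof.
  intros Na Nb H. remember (inB b) as u eqn:Hu. remember (inA a) as v eqn:Hv.
  destruct H as [x y H|x y H|x c y Hc H1 H2|y c x Hc H1 H2].
  - apply inA_eq_inB in Hu as [c [_ E]]. destruct (Nb c E).
  - apply eq_sym, inA_eq_inB in Hv as [c [E _]]. destruct (Na c E).
  - apply inA_eq_inB in Hu as [d [_ E]]. destruct (Nb d E).
  - rewrite <- (inB_inj Hu), <- (inA_inj Hv). eauto.
Qed.

Lemma amalg_finite : finite_type A -> finite_type B -> finite_type amalg_carrier.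
Proof.
  intros [LA HLA] [LB HLB].
  exists (map inA LA ++ map inB LB). intro u.
  apply in_or_app. destruct (amalg_cases u) as [[a ->]|[b ->]].
  - left. apply in_map, HLA.
  - right. apply in_map, HLB.
Qed.

Lemma amalg_reflexive :
  reflexive _ (rel A) -> reflexive _ (rel B) -> reflexive _ amalg_rel.
Proof.
  intros HA HB u. destruct (amalg_cases u) as [[a ->]|[b ->]].
  - apply amalg_relA, HA.
  - apply amalg_relB, HB.
Qed.

Lemma amalg_irreflexive : compose = false ->
  irreflexive (rel A) -> irreflexive (rel B) -> irreflexive amalg_rel.
Proof.
  intros Hc HA HB.
  enough (Hne : forall u v, amalg_rel u v -> u <> v) by (intros u H; exact (Hne u u H eq_refl)).
  intros u v [x y H|x y H|x c y Hc' _ _|y c x Hc' _ _] E; try congruence.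
  - rewrite (inA_inj E) in H. exact (HA _ H).
  - rewrite (inB_inj E) in H. exact (HB _ H).
Qed.

Section Composition.
Hypothesis Hc : compose = true.

Lemma amalg_rel_inA_left x y w : rel A x y -> amalg_rel (inA y) w -> amalg_rel (inA x) w.
Proof.
  intros Hxy H. remember (inA y) as v eqn:Hv.
  destruct H as [y' z H|y' z H|y' c z _ H1 H2|z' c z _ H1 H2].
  - rewrite <- (inA_inj Hv) in Hxy. exact (amalg_relA (transA Hc _ _ _ Hxy H)).
  - apply eq_sym, inA_eq_inB in Hv as [c [<- <-]]. exact (amalg_relAB Hc Hxy H).
  - rewrite <- (inA_inj Hv) in Hxy. exact (amalg_relAB Hc (transA Hc _ _ _ Hxy H1) H2).
  - apply eq_sym, inA_eq_inB in Hv as [d [<- <-]]. apply amalg_relA.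
    apply (transA Hc _ _ _ Hxy), (transA Hc _ (eA c)); [apply rel_eA_eB, H1|exact H2].
Qed.

Lemma amalg_rel_inB_left x y w : rel B x y -> amalg_rel (inB y) w -> amalg_rel (inB x) w.
Proof.
  intros Hxy H. remember (inB y) as v eqn:Hv.
  destruct H as [y' z H|y' z H|y' c z _ H1 H2|z' c z _ H1 H2].
  - apply inA_eq_inB in Hv as [c [<- <-]]. exact (amalg_relBA Hc Hxy H).
  - rewrite <- (inB_inj Hv) in Hxy. exact (amalg_relB (transB Hc _ _ _ Hxy H)).
  - apply inA_eq_inB in Hv as [d [<- <-]]. apply amalg_relB.
    apply (transB Hc _ _ _ Hxy), (transB Hc _ (eB c)); [apply rel_eA_eB, H1|exact H2].
  - rewrite <- (inB_inj Hv) in Hxy. exact (amalg_relBA Hc (transB Hc _ _ _ Hxy H1) H2).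
Qed.

Lemma amalg_transitive : transitive _ amalg_rel.
Proof.
  enough (H : forall u v, amalg_rel u v -> forall w, amalg_rel v w -> amalg_rel u w)
    by (intros u v w Huv; exact (H u v Huv w)).
  apply (@amalg_rel_min (fun u v => forall w, amalg_rel v w -> amalg_rel u w)).
  - intros x y Hxy w. apply amalg_rel_inA_left, Hxy.
  - intros x y Hxy w. apply amalg_rel_inB_left, Hxy.
  - intros _ u v w Huv Hvw z Hwz. auto.
Qed.

Lemma amalg_antisymmetric :
  antisymmetric _ (rel A) -> antisymmetric _ (rel B) -> antisymmetric _ amalg_rel.
Proof.
  intros HA HB.
  enough (H : forall u v, amalg_rel u v -> amalg_rel u v /\ (amalg_rel v u -> u = v))
    by (intros u v Huv; exact (proj2 (H u v Huv))).
  apply (@amalg_rel_min (fun u v => amalg_rel u v /\ (amalg_rel v u -> u = v))).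
  - intros x y Hxy. split; [exact (amalg_relA Hxy)|].
    intro Hyx. f_equal. apply HA, inA_rel; auto.
  - intros x y Hxy. split; [exact (amalg_relB Hxy)|].
    intro Hyx. f_equal. apply HB, inB_rel; auto.
  - intros _ u v w [Huv Evu] [Hvw Ewv]. split; [exact (amalg_transitive Huv Hvw)|].
    intro Hwu. assert (Euv : u = v) by exact (Evu (amalg_transitive Hvw Hwu)).
    subst v. exact (Ewv Hwu).
Qed.

End Composition.

Lemma amalg_symmetric : symmetric _ (rel A) -> symmetric _ (rel B) -> symmetric _ amalg_rel.
Proof.
  intros HA HB; red. apply (@amalg_rel_min (fun u v => amalg_rel v u)).
  - intros x y Hxy. apply amalg_relA, HA, Hxy.
  - intros x y Hxy. apply amalg_relB, HB, Hxy.
  - intros Hc u v w Hvu Hwv. exact (amalg_transitive Hc Hwv Hvu).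
Qed.

Lemma amalg_preserving i :
  preserving (rel A) (op A i) -> preserving (rel B) (op B i) -> preserving amalg_rel (amalg_op i).
Proof.
  intros HA HB; red. apply (@amalg_rel_min (fun u v => amalg_rel (amalg_op i u) (amalg_op i v))).
  - intros x y Hxy. apply amalg_relA, HA, Hxy.
  - intros x y Hxy. rewrite !amalg_op_inB. apply amalg_relB, HB, Hxy.
  - intros Hc u v w. apply amalg_transitive, Hc.
Qed.

Lemma amalg_reversing i :
  reversing (rel A) (op A i) -> reversing (rel B) (op B i) -> reversing amalg_rel (amalg_op i).
Proof.
  intros HA HB; red. apply (@amalg_rel_min (fun u v => amalg_rel (amalg_op i v) (amalg_op i u))).
  - intros x y Hxy. apply amalg_relA, HA, Hxy.
  - intros x y Hxy. rewrite !amalg_op_inB. apply amalg_relB, HB, Hxy.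
  - intros Hc u v w Hvu Hwv. exact (amalg_transitive Hc Hwv Hvu).
Qed.

Section StrictOperations.
Hypothesis Hc : compose = true.
Hypotheses (antiA : antisymmetric _ (rel A)) (antiB : antisymmetric _ (rel B)).

Lemma amalg_strict_transitive : transitive _ (strict amalg_rel).
Proof. exact (strict_transitive (amalg_transitive Hc) (amalg_antisymmetric Hc antiA antiB)). Qed.

Lemma amalg_strict_preserving i :
  preserving (strict (rel A)) (op A i) -> preserving (strict (rel B)) (op B i) ->
  preserving (strict amalg_rel) (amalg_op i).
Proof.
  intros HA HB.
  enough (H : forall u v, amalg_rel u v -> u = v \/ strict amalg_rel (amalg_op i u) (amalg_op i v))
    by (intros u v [Huv Hne]; destruct (H u v Huv); [contradiction|assumption]).
  apply (@amalg_rel_min (fun u v => u = v \/ strict amalg_rel (amalg_op i u) (amalg_op i v))).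
  - intros x y Hxy. destruct (classic (x = y)) as [->|Hne]; [left; reflexivity|right].
    change (strict (rel amalg) (inA (op A i x)) (inA (op A i y))).
    apply (embedding_strict inA_embedding), HA. split; assumption.
  - intros x y Hxy. destruct (classic (x = y)) as [->|Hne]; [left; reflexivity|right].
    rewrite !amalg_op_inB. apply (embedding_strict inB_embedding), HB. split; assumption.
  - intros _ u v w [->|Huv] [->|Hvw]; auto.
    right. exact (amalg_strict_transitive Huv Hvw).
Qed.

Lemma amalg_strict_reversing i :
  reversing (strict (rel A)) (op A i) -> reversing (strict (rel B)) (op B i) ->
  reversing (strict amalg_rel) (amalg_op i).
Proof.
  intros HA HB.
  enough (H : forall u v, amalg_rel u v -> u = v \/ strict amalg_rel (amalg_op i v) (amalg_op i u))
    by (intros u v [Huv Hne]; destruct (H u v Huv); [contradiction|assumption]).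
  apply (@amalg_rel_min (fun u v => u = v \/ strict amalg_rel (amalg_op i v) (amalg_op i u))).
  - intros x y Hxy. destruct (classic (x = y)) as [->|Hne]; [left; reflexivity|right].
    change (strict (rel amalg) (inA (op A i y)) (inA (op A i x))).
    apply (embedding_strict inA_embedding), HA. split; assumption.
  - intros x y Hxy. destruct (classic (x = y)) as [->|Hne]; [left; reflexivity|right].
    rewrite !amalg_op_inB. apply (embedding_strict inB_embedding), HB. split; assumption.
  - intros _ u v w [->|Huv] [->|Hvw]; auto.
    right. exact (amalg_strict_transitive Hvw Huv).
Qed.

End StrictOperations.

End Amalgam.

Arguments amalg {I A B C} eA eB compose.
Arguments inA {I A B C} eB a.
Arguments inB {I A B C} eA eB b.

Definition empty_struct (I : Type) : struct I :=
  {| carrier := Empty_set; rel := fun _ _ => False; op := fun _ x => x |}.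

Definition hereditary {I} (K : struct I -> Prop) : Prop :=
  forall (A B : struct I) (h : A -> B), embedding h -> K B -> K A.

Definition finite_amalgamation {I} (K : struct I -> Prop) : Prop :=
  forall (A B C : struct I) (eA : C -> A) (eB : C -> B),
    K A -> K B -> embedding eA -> embedding eB -> finite_type A -> finite_type B ->
    exists (D : struct I) (f : A -> D) (g : B -> D),
      K D /\ finite_type D /\ embedding f /\ embedding g /\ forall c, f (eA c) = g (eB c).

Lemma JEP_of_superSAP {I} (K : struct I -> Prop) : superSAP K -> K (empty_struct I) -> JEP K.
Proof.
  intros HK K0 A B KA KB.
  pose (eA := fun x : empty_struct I => match x return A with end).
  pose (eB := fun x : empty_struct I => match x return B with end).
  assert (HeA : embedding eA) by (split; [intros []|split; [intros []|intros ? []]]).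
  assert (HeB : embedding eB) by (split; [intros []|split; [intros []|intros ? []]]).
  destruct (HK A B _ eA eB KA KB K0 HeA HeB) as [D [f [g [KD [Hf [Hg _]]]]]].
  exists D, f, g. auto.
Qed.

Section AmalgamationClass.
Variables (I : Type) (K : struct I -> Prop) (compose : bool).
Hypothesis K_transitive : forall A, K A -> compose = true -> transitive _ (rel A).
Hypothesis K_amalg : forall (A B C : struct I) (eA : C -> A) (eB : C -> B),
  embedding eA -> embedding eB -> K A -> K B -> K (amalg eA eB compose).

Lemma superSAP_of_amalg : superSAP K.
Proof.
  intros A B C eA eB KA KB _ HeA HeB.
  pose proof (K_transitive KA) as TA. pose proof (K_transitive KB) as TB.
  exists (amalg eA eB compose), (inA eB), (inB eA eB).
  split; [apply K_amalg; auto|].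
  split; [apply inA_embedding; auto|].
  split; [apply inB_embedding; auto|].
  split; [intro c; symmetry; apply inB_eB; auto|].
  split; [intros a b E; apply inA_eq_inB; auto|].
  split; intros a b Na Nb H.
  - exact (amalg_rel_inA_inB HeA HeB Na Nb H).
  - exact (amalg_rel_inB_inA HeA HeB Na Nb H).
Qed.

Lemma finite_amalgamation_of_amalg : finite_amalgamation K.
Proof.
  intros A B C eA eB KA KB HeA HeB FA FB.
  pose proof (K_transitive KA) as TA. pose proof (K_transitive KB) as TB.
  exists (amalg eA eB compose), (inA eB), (inB eA eB).
  split; [apply K_amalg; auto|].
  split; [apply amalg_finite; auto|].
  split; [apply inA_embedding; auto|].
  split; [apply inB_embedding; auto|].
  intro c; symmetry; apply inB_eB; auto.
Qed.

End AmalgamationClass.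

(** * Structures on finite sets of natural numbers *)

Section NatStructures.
Variable I : Type.

Record nstruct := NStruct {
  ndom : nat -> Prop;
  nrel : nat -> nat -> Prop;
  nop : I -> nat -> nat }.

Definition nclosed (c : nstruct) : Prop := forall i x, ndom c x -> ndom c (nop c i x).

Definition nfinite (c : nstruct) : Prop := exists L, forall x, ndom c x <-> In x L.

(** If [c] is not closed, [nop] may leave the domain; the argument is then returned. *)
Definition to_struct (c : nstruct) : struct I :=
  {| carrier := {x | ndom c x};
     rel := fun x y => nrel c (proj1_sig x) (proj1_sig y);
     op := fun i x => match EM (ndom c (nop c i (proj1_sig x))) with
                      | left p => exist _ _ p
                      | right _ => x end |}.

Lemma to_struct_op c i (x : to_struct c) :
  nclosed c -> proj1_sig (op (to_struct c) i x) = nop c i (proj1_sig x).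
Proof.
  intros Hc. simpl. destruct (EM _) as [p|n]; [reflexivity|].
  exfalso; apply n, Hc, (proj2_sig x).
Qed.

Lemma to_struct_finite c : nfinite c -> finite_type (to_struct c).
Proof.
  intros [L HL]. apply (@finite_of_injection _ (@proj1_sig _ _) L).
  - intros x y; apply sig_ext.
  - intro x; apply HL, (proj2_sig x).
Qed.

Definition nextends (c c' : nstruct) : Prop :=
  (forall x, ndom c x -> ndom c' x) /\
  (forall x y, ndom c x -> ndom c y -> (nrel c x y <-> nrel c' x y)) /\
  (forall i x, ndom c x -> nop c' i x = nop c i x).

Lemma nextends_refl c : nextends c c.
Proof. split; [|split]; auto; tauto. Qed.

Lemma nextends_trans c1 c2 c3 : nextends c1 c2 -> nextends c2 c3 -> nextends c1 c3.
Proof.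
  intros [U1 [R1 F1]] [U2 [R2 F2]]. split; [|split]; auto.
  - intros x y Hx Hy. rewrite R1, R2; auto. reflexivity.
  - intros i x Hx. rewrite F2, F1; auto.
Qed.

Lemma nextends_embedding c1 c2 : nclosed c1 -> nextends c1 c2 ->
  exists h : to_struct c1 -> to_struct c2, embedding h /\ forall x, proj1_sig (h x) = proj1_sig x.
Proof.
  intros Hc [HU [HR HF]].
  exists (fun x => exist _ (proj1_sig x) (HU _ (proj2_sig x))).
  split; [split; [|split]|reflexivity].
  - intros x y E. apply sig_ext. exact (f_equal (@proj1_sig _ _) E).
  - intros x y. apply HR; apply proj2_sig.
  - intros i x. apply sig_ext.
    transitivity (nop c1 i (proj1_sig x)); [exact (to_struct_op _ _ Hc)|]. simpl.
    destruct (EM _) as [p|n]; simpl.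
    + symmetry; apply HF, proj2_sig.
    + exfalso; apply n. rewrite HF by apply proj2_sig. apply HU, Hc, proj2_sig.
Qed.

Definition nrestrict (c : nstruct) (S : nat -> Prop) : nstruct := NStruct S (nrel c) (nop c).

Lemma nrestrict_extends c (S : nat -> Prop) :
  (forall x, S x -> ndom c x) -> nextends (nrestrict c S) c.
Proof. intros HS. split; [|split]; simpl; auto; reflexivity. Qed.

Section Transport.
Variables (D : struct I) (j : D -> nat).
Hypothesis j_inj : forall d d', j d = j d' -> d = d'.

Definition transport : nstruct :=
  NStruct (fun n => exists d, j d = n)
          (fun n m => exists d d', j d = n /\ j d' = m /\ rel D d d')
          (fun i n => match EM (exists d, j d = n) with
                      | left H => j (op D i (choose H))
                      | right _ => n end).

Lemma transport_op i d : nop transport i (j d) = j (op D i d).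
Proof.
  simpl. destruct (EM _) as [H|H]; [|exfalso; eauto].
  rewrite (j_inj (choose_spec H)). reflexivity.
Qed.

Lemma transport_rel d d' : nrel transport (j d) (j d') <-> rel D d d'.
Proof.
  simpl. split; [|eauto].
  intros [e [e' [E [E' H]]]]. rewrite <- (j_inj E), <- (j_inj E'). exact H.
Qed.

Lemma transport_closed : nclosed transport.
Proof. intros i n [d <-]. exists (op D i d). symmetry. apply transport_op. Qed.

Lemma transport_finite : finite_type D -> nfinite transport.
Proof.
  intros [L HL]. exists (map j L). intro n. split.
  - intros [d <-]. apply in_map, HL.
  - intros Hn. apply in_map_iff in Hn as [d [<- _]]. exists d. reflexivity.
Qed.

Definition transport_map (d : D) : to_struct transport := exist _ (j d) (ex_intro _ d eq_refl).

Lemma transport_map_iso : isomorphism transport_map.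
Proof.
  split; [split; [|split]|].
  - intros d d' E. apply j_inj. exact (f_equal (@proj1_sig _ _) E).
  - intros d d'. symmetry. apply transport_rel.
  - intros i d. apply sig_ext.
    transitivity (nop transport i (j d)); [symmetry; apply transport_op|].
    symmetry. exact (to_struct_op _ _ transport_closed).
  - intros [n [d E]]. exists d. apply sig_ext. exact E.
Qed.

End Transport.

Section Recode.
Variables (c : nstruct) (D : struct I) (h : to_struct c -> D) (b : nat) (LD : list D).
Hypotheses (Hh : embedding h) (Hb : forall x, ndom c x -> x < b) (HLD : forall d, In d LD).

Definition recode_name (d : D) : nat :=
  match EM (exists x, h x = d) with
  | left H => proj1_sig (choose H)
  | right _ => b + index_of d LD
  end.

Lemma recode_name_h x : recode_name (h x) = proj1_sig x.
Proof.
  unfold recode_name. destruct (EM _) as [H|H]; [|exfalso; eauto].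
  rewrite (embedding_inj Hh (choose_spec H)). reflexivity.
Qed.

Lemma recode_name_inj d d' : recode_name d = recode_name d' -> d = d'.
Proof.
  destruct (classic (exists x, h x = d)) as [[x <-]|N];
  destruct (classic (exists x, h x = d')) as [[x' <-]|N'].
  - rewrite !recode_name_h. intro E. rewrite (sig_ext _ _ E). reflexivity.
  - rewrite recode_name_h. unfold recode_name. destruct (EM _); [contradiction|].
    pose proof (Hb _ (proj2_sig x)). lia.
  - rewrite recode_name_h. unfold recode_name. destruct (EM _); [contradiction|].
    pose proof (Hb _ (proj2_sig x')). lia.
  - unfold recode_name. do 2 (destruct (EM _); [contradiction|]).
    intro E. apply (index_of_inj LD); auto. lia.
Qed.

Lemma recode_extends : nclosed c -> nextends c (transport D recode_name).
Proof.
  intros Hc. pose (x' := fun x (Hx : ndom c x) => exist (ndom c) x Hx).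
  assert (Ex : forall x Hx, recode_name (h (x' x Hx)) = x) by (intros; apply recode_name_h).
  split; [|split].
  - intros x Hx. exists (h (x' x Hx)). apply Ex.
  - intros x y Hx Hy. rewrite <- (Ex x Hx), <- (Ex y Hy) at 2.
    rewrite (transport_rel _ _ recode_name_inj), <- (embedding_rel Hh). reflexivity.
  - intros i x Hx. rewrite <- (Ex x Hx) at 1.
    rewrite (transport_op _ _ recode_name_inj), <- (embedding_op Hh), recode_name_h.
    apply to_struct_op, Hc.
Qed.

End Recode.

Lemma recode c (D : struct I) (h : to_struct c -> D) :
  nclosed c -> nfinite c -> finite_type D -> embedding h ->
  exists (c' : nstruct) (f : D -> to_struct c'),
    nclosed c' /\ nfinite c' /\ nextends c c' /\ isomorphism f /\
    forall x, proj1_sig (f (h x)) = proj1_sig x.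
Proof.
  intros Hc [Lc HLc] HD Hh. destruct (list_bound Lc) as [b Hb].
  assert (Hb' : forall x, ndom c x -> x < b) by (intros x Hx; apply Hb, HLc, Hx).
  pose proof HD as [LD HLD].
  pose proof (@recode_name_inj c D h b LD Hh Hb' HLD) as Hinj.
  exists (transport D (recode_name D h b LD)), (transport_map D (recode_name D h b LD)).
  split; [apply transport_closed, Hinj|].
  split; [apply transport_finite; auto|].
  split; [apply recode_extends; auto|].
  split; [exact (transport_map_iso _ _ Hinj)|].
  intro x. apply recode_name_h, Hh.
Qed.

Section Restriction.
Variables (c a : nstruct) (S : nat -> Prop).
Hypotheses (HS : forall x, S x <-> ndom a x) (Hac : nextends a c).

Lemma nrestrict_closed : nclosed a -> nclosed (nrestrict c S).
Proof.
  intros Ha i x Hx. apply HS in Hx. simpl. rewrite (proj2 (proj2 Hac)) by exact Hx.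
  apply HS, Ha, Hx.
Qed.

Lemma nrestrict_extends_to d : nextends a d -> nextends (nrestrict c S) d.
Proof.
  intros Had. split; [|split].
  - intros x Hx. apply Had, HS, Hx.
  - intros x y Hx Hy. apply HS in Hx, Hy. simpl.
    rewrite <- (proj1 (proj2 Hac) x y Hx Hy). exact (proj1 (proj2 Had) x y Hx Hy).
  - intros i x Hx. apply HS in Hx. simpl.
    rewrite (proj2 (proj2 Had) i x Hx). symmetry. exact (proj2 (proj2 Hac) i x Hx).
Qed.

End Restriction.

Lemma nclosed_equiv (c c' : nstruct) : nextends c c' -> nextends c' c -> nclosed c -> nclosed c'.
Proof.
  intros [U _] [U' [_ F']] Hc i x Hx. rewrite <- F' by exact Hx. apply U, Hc, U', Hx.
Qed.

Lemma nfinite_equiv (c c' : nstruct) : nextends c c' -> nextends c' c -> nfinite c -> nfinite c'.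
Proof.
  intros [U _] [U' _] [L HL]. exists L. intro x. rewrite <- HL. split; auto.
Qed.

End NatStructures.

(** * The Fraïssé limit *)

Section Fraisse.
Variables (I : Type) (K : struct I -> Prop).
Hypotheses (I_finite : finite_type I) (K_hereditary : hereditary K)
  (K_amalgamation : finite_amalgamation K) (K_empty : K (empty_struct I)).

Definition op_index (i : I) : nat := index_of i (choose I_finite).

Lemma op_index_inj i i' : op_index i = op_index i' -> i = i'.
Proof. apply index_of_inj; apply (choose_spec I_finite). Qed.

(** A task [(S, V, RP, OT)] describes the finite structure on [V] with relation [RP] in which
    [op i x = z] for [(op_index i, x, z)] in [OT]; the elements listed in [S] keep their names
    when the task is carried out. *)
Definition task : Type := (list nat * list nat * list (nat * nat) * list (nat * nat * nat))%type.

Lemma enumerable_task : enumerable task.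
Proof.
  unfold task. repeat apply enumerable_prod; repeat apply enumerable_list;
    repeat apply enumerable_prod; apply enumerable_nat.
Qed.

Definition task_kept (t : task) : list nat := let '(kept, _, _, _) := t in kept.

Definition lookup (k x : nat) (OT : list (nat * nat * nat)) : nat :=
  match find (fun '(a, b, _) => Nat.eqb a k && Nat.eqb b x) OT with
  | Some (_, _, z) => z
  | None => x
  end.

Lemma lookup_spec k x z OT :
  In (k, x, z) OT -> (forall z', In (k, x, z') OT -> z' = z) -> lookup k x OT = z.
Proof.
  intros Hin Huniq. unfold lookup.
  destruct (find _ OT) as [[[a b] z']|] eqn:E.
  - apply find_some in E as [Hin' Ht]. apply andb_prop in Ht as [H1 H2].
    apply Nat.eqb_eq in H1, H2. subst. exact (Huniq _ Hin').
  - apply (find_none _ _ E) in Hin. rewrite !Nat.eqb_refl in Hin. discriminate.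
Qed.

Definition task_struct (t : task) : nstruct I :=
  let '(_, V, RP, OT) := t in
  NStruct (fun x => In x V) (fun x y => In (x, y) RP) (fun i x => lookup (op_index i) x OT).

Definition task_core (t : task) : nstruct I :=
  nrestrict (task_struct t) (fun x => In x (task_kept t)).

Lemma task_of_nstruct (c : nstruct I) (kept L : list nat) : (forall x, ndom c x <-> In x L) ->
  exists t, task_kept t = kept /\ nextends c (task_struct t) /\ nextends (task_struct t) c.
Proof.
  intros HL.
  set (RP := filter (fun p => if EM (nrel c (fst p) (snd p)) then true else false) (list_prod L L)).
  set (OT := flat_map (fun i => map (fun x => (op_index i, x, nop c i x)) L) (choose I_finite)).
  assert (Hrel : forall x y, ndom c x -> ndom c y -> (nrel c x y <-> In (x, y) RP)).
  { intros x y Hx Hy. unfold RP. rewrite filter_In, in_prod_iff, <- !HL. simpl.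
    destruct (EM (nrel c x y)); intuition discriminate. }
  assert (Hop : forall i x, ndom c x -> lookup (op_index i) x OT = nop c i x).
  { intros i x Hx. apply lookup_spec.
    - apply in_flat_map. exists i. split; [apply (choose_spec I_finite)|].
      apply in_map_iff. exists x. split; [reflexivity|apply HL, Hx].
    - intros z' Hz. apply in_flat_map in Hz as [i' [_ Hz]].
      apply in_map_iff in Hz as [x' [E _]]. injection E as E1 <- <-.
      rewrite (op_index_inj _ _ E1). reflexivity. }
  exists (kept, L, RP, OT).
  split; [reflexivity|split; split; [|split| |split]]; simpl.
  - intros x Hx. apply HL, Hx.
  - exact Hrel.
  - exact Hop.
  - intros x Hx. apply HL, Hx.
  - intros x y Hx Hy. symmetry. apply Hrel; apply HL; assumption.
  - intros i x Hx. symmetry. apply Hop, HL, Hx.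
Qed.

Definition admissible (c : nstruct I) : Prop := nclosed c /\ nfinite c /\ K (to_struct c).

Lemma admissible_of_iso (c : nstruct I) (D : struct I) (f : D -> to_struct c) :
  nclosed c -> nfinite c -> K D -> isomorphism f -> admissible c.
Proof.
  intros Hc Hfin HD Hf. destruct (isomorphism_inv Hf) as [g Hg].
  exact (conj Hc (conj Hfin (K_hereditary Hg HD))).
Qed.

Lemma admissible_equiv (c c' : nstruct I) :
  admissible c -> nextends c c' -> nextends c' c -> admissible c'.
Proof.
  intros [Hc [Hfin HK]] Hcc' Hc'c.
  pose proof (nclosed_equiv Hcc' Hc'c Hc) as Hc'.
  destruct (nextends_embedding Hc' Hc'c) as [h [Hh _]].
  exact (conj Hc' (conj (nfinite_equiv Hcc' Hc'c Hfin) (K_hereditary Hh HK))).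
Qed.

Definition task_ok (t : task) : Prop :=
  admissible (task_struct t) /\ nclosed (task_core t) /\
  forall x, In x (task_kept t) -> ndom (task_struct t) x.

Definition applicable (c : nstruct I) (t : task) : Prop :=
  admissible c /\ task_ok t /\ nextends (task_core t) c.

Definition realizes (c : nstruct I) (t : task) : Prop :=
  exists h : to_struct (task_struct t) -> to_struct c, embedding h /\
    forall x, In (proj1_sig x) (task_kept t) -> proj1_sig (h x) = proj1_sig x.

Lemma applicable_extends c c' t :
  applicable c t -> admissible c' -> nextends c c' -> applicable c' t.
Proof.
  intros [_ [Ht Hext]] Hc' Hcc'. exact (conj Hc' (conj Ht (nextends_trans Hext Hcc'))).
Qed.

(** Amalgamate [c] and the task over the task's core, then rename the amalgam so that it
    extends [c]. *)
Lemma step_exists c t : applicable c t ->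
  exists c', admissible c' /\ nextends c c' /\ realizes c' t.
Proof.
  intros [[Hc [Hfin HK]] [[[_ [Htfin HtK]] [Hcore Hkept]] Hext]].
  destruct (nextends_embedding Hcore Hext) as [eC [HeC HeCv]].
  destruct (nextends_embedding Hcore (nrestrict_extends _ _ Hkept)) as [eT [HeT HeTv]].
  destruct (K_amalgamation HK HtK HeC HeT (to_struct_finite Hfin) (to_struct_finite Htfin))
    as [D [f [g [HKD [HDfin [Hf [Hg Hfg]]]]]]].
  destruct (recode Hc Hfin HDfin Hf) as [c' [j [Hc' [Hc'fin [Hcc' [Hj Hjf]]]]]].
  exists c'. split; [exact (admissible_of_iso Hc' Hc'fin HKD Hj)|split; [exact Hcc'|]].
  exists (fun x => j (g x)). split; [exact (embedding_comp Hg (proj1 Hj))|].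
  intros x Hx.
  assert (Ex : eT (exist _ (proj1_sig x) Hx) = x) by (apply sig_ext, HeTv).
  rewrite <- Ex, <- Hfg, Hjf, HeCv, HeTv. reflexivity.
Qed.

Definition task_enum : nat -> task := choose enumerable_task.

Lemma task_enum_onto t : exists n, task_enum n = t.
Proof. exact (choose_spec enumerable_task t). Qed.

Definition step (c : nstruct I) (t : task) : nstruct I :=
  match EM (applicable c t) with
  | left H => choose (step_exists H)
  | right _ => c
  end.

Definition empty_nstruct : nstruct I := NStruct (fun _ => False) (fun _ _ => False) (fun _ x => x).

(** Since [of_nat] is onto, every task is attempted at arbitrarily late stages. *)
Fixpoint stage (s : nat) : nstruct I :=
  match s with
  | 0 => empty_nstruct
  | S s' => step (stage s') (task_enum (fst (of_nat s')))
  end.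

Lemma step_spec c t : admissible c -> admissible (step c t) /\ nextends c (step c t).
Proof.
  intros Hc. unfold step. destruct (EM _) as [H|H].
  - destruct (choose_spec (step_exists H)) as [H1 [H2 _]]. auto.
  - split; [exact Hc|apply nextends_refl].
Qed.

Lemma step_realizes c t : applicable c t -> realizes (step c t) t.
Proof.
  intros Happ. unfold step. destruct (EM _) as [H|H]; [|contradiction].
  exact (proj2 (proj2 (choose_spec (step_exists H)))).
Qed.

Lemma admissible_empty : admissible empty_nstruct.
Proof.
  split; [|split].
  - intros i x [].
  - exists []. simpl. tauto.
  - pose (e := fun x : to_struct empty_nstruct => match proj2_sig x return empty_struct I with end).
    assert (He : embedding e) by (split; [|split]; intros; destruct (proj2_sig x)).
    exact (K_hereditary He K_empty).
Qed.

Lemma stage_admissible s : admissible (stage s).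
Proof. induction s; [exact admissible_empty|apply step_spec, IHs]. Qed.

Lemma stage_extends s s' : s <= s' -> nextends (stage s) (stage s').
Proof.
  induction 1; [apply nextends_refl|].
  apply (nextends_trans IHle), step_spec, stage_admissible.
Qed.

Lemma task_eventually_realized s0 t : applicable (stage s0) t -> exists s, realizes (stage s) t.
Proof.
  intros Happ. destruct (task_enum_onto t) as [k Hk].
  pose (s := to_nat (k, s0)).
  assert (Hs : s0 <= s) by (pose proof (to_nat_non_decreasing k s0); unfold s; lia).
  exists (S s). simpl. unfold s at 2. rewrite cancel_of_to. simpl fst. rewrite Hk.
  apply step_realizes, (applicable_extends Happ (stage_admissible s)), stage_extends, Hs.
Qed.

Definition in_limit (n : nat) : Prop := exists s, ndom (stage s) n.

Definition birth (x : {n | in_limit n}) : nat := choose (proj2_sig x).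

Lemma birth_spec x : ndom (stage (birth x)) (proj1_sig x).
Proof. exact (choose_spec (proj2_sig x)). Qed.

Definition limit : struct I :=
  {| carrier := {n | in_limit n};
     rel := fun x y => exists s, ndom (stage s) (proj1_sig x) /\ ndom (stage s) (proj1_sig y) /\
                                 nrel (stage s) (proj1_sig x) (proj1_sig y);
     op := fun i x => exist _ (nop (stage (birth x)) i (proj1_sig x))
                        (ex_intro _ (birth x) (proj1 (stage_admissible _) i _ (birth_spec x))) |}.

Lemma stage_nop_agree s s' i x :
  ndom (stage s) x -> ndom (stage s') x -> nop (stage s) i x = nop (stage s') i x.
Proof.
  intros Hx Hx'.
  rewrite <- (proj2 (proj2 (stage_extends (Nat.le_max_l s s'))) i x Hx).
  exact (proj2 (proj2 (stage_extends (Nat.le_max_r s s'))) i x Hx').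
Qed.

Lemma stage_nrel_agree s s' x y : ndom (stage s) x -> ndom (stage s) y ->
  ndom (stage s') x -> ndom (stage s') y -> (nrel (stage s) x y <-> nrel (stage s') x y).
Proof.
  intros Hx Hy Hx' Hy'.
  rewrite (proj1 (proj2 (stage_extends (Nat.le_max_l s s'))) x y Hx Hy).
  symmetry. exact (proj1 (proj2 (stage_extends (Nat.le_max_r s s'))) x y Hx' Hy').
Qed.

Lemma limit_op_value s i (x : limit) :
  ndom (stage s) (proj1_sig x) -> proj1_sig (op limit i x) = nop (stage s) i (proj1_sig x).
Proof. intros Hx. apply stage_nop_agree; [apply birth_spec|exact Hx]. Qed.

Lemma limit_rel_iff s (x y : limit) :
  ndom (stage s) (proj1_sig x) -> ndom (stage s) (proj1_sig y) ->
  (rel limit x y <-> nrel (stage s) (proj1_sig x) (proj1_sig y)).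
Proof.
  intros Hx Hy. split; [|intro H; exists s; auto].
  intros [s' [Hx' [Hy' H]]]. exact (proj1 (stage_nrel_agree _ _ _ _ Hx' Hy' Hx Hy) H).
Qed.

Lemma stage_common (l : list limit) : exists s, forall x, In x l -> ndom (stage s) (proj1_sig x).
Proof.
  induction l as [|a l [s Hs]]; [exists 0; simpl; tauto|].
  destruct (proj2_sig a) as [sa Ha]. exists (Nat.max s sa). intros x [<-|Hx].
  - exact (proj1 (stage_extends (Nat.le_max_r s sa)) _ Ha).
  - exact (proj1 (stage_extends (Nat.le_max_l s sa)) _ (Hs x Hx)).
Qed.

Definition stage_inclusion (s : nat) (x : to_struct (stage s)) : limit :=
  exist _ (proj1_sig x) (ex_intro _ s (proj2_sig x)).

Lemma stage_inclusion_embedding s : embedding (stage_inclusion s).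
Proof.
  split; [|split].
  - intros x y E. apply sig_ext. exact (f_equal (@proj1_sig _ _) E).
  - intros x y. symmetry.
    exact (@limit_rel_iff s (stage_inclusion s x) (stage_inclusion s y)
             (proj2_sig x) (proj2_sig y)).
  - intros i x. apply sig_ext. transitivity (nop (stage s) i (proj1_sig x)).
    + exact (to_struct_op _ _ (proj1 (stage_admissible s))).
    + symmetry. exact (@limit_op_value s i (stage_inclusion s x) (proj2_sig x)).
Qed.

Lemma generated_in_stage (l : list limit) s : (forall x, In x l -> ndom (stage s) (proj1_sig x)) ->
  forall x, generated l x -> ndom (stage s) (proj1_sig x).
Proof.
  intros Hl x Hx. apply (Hx (fun y : limit => ndom (stage s) (proj1_sig y))); [|exact Hl].
  intros i y Hy. rewrite (limit_op_value _ _ _ Hy). apply (proj1 (stage_admissible s)), Hy.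
Qed.

Section GeneratedSubstructure.
Variables (l : list limit) (s : nat).
Hypothesis Hls : forall x, In x l -> ndom (stage s) (proj1_sig x).

Definition gen_nstruct : nstruct I :=
  nrestrict (stage s) (fun n => exists m : limit, proj1_sig m = n /\ generated l m).

Lemma gen_nstruct_extends : nextends gen_nstruct (stage s).
Proof. apply nrestrict_extends. intros n [m [<- Hm]]. exact (generated_in_stage _ Hls Hm). Qed.

Lemma gen_nstruct_closed : nclosed gen_nstruct.
Proof.
  intros i n [m [<- Hm]]. exists (op limit i m). split.
  - apply limit_op_value, (generated_in_stage _ Hls Hm).
  - apply generated_closed, Hm.
Qed.

Lemma gen_nstruct_finite : nfinite gen_nstruct.
Proof.
  destruct (proj1 (proj2 (stage_admissible s))) as [L HL].
  apply (finite_subset _ L). intros n Hn. apply HL, gen_nstruct_extends, Hn.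
Qed.

Definition gen_nstruct_elt (y : to_struct gen_nstruct) : gen_struct l :=
  exist _ (choose (proj2_sig y)) (proj2 (choose_spec (proj2_sig y))).

Lemma gen_nstruct_elt_value y : proj1_sig (proj1_sig (gen_nstruct_elt y)) = proj1_sig y.
Proof. exact (proj1 (choose_spec (proj2_sig y))). Qed.

Lemma gen_nstruct_elt_iso : isomorphism gen_nstruct_elt.
Proof.
  assert (Hin : forall y, ndom (stage s) (proj1_sig (proj1_sig (gen_nstruct_elt y))))
    by (intro y; apply (generated_in_stage _ Hls), proj2_sig).
  split; [split; [|split]|].
  - intros y y' E. apply sig_ext. rewrite <- !gen_nstruct_elt_value, E. reflexivity.
  - intros y y'. simpl rel at 2.
    rewrite (limit_rel_iff _ _ _ (Hin y) (Hin y')), !gen_nstruct_elt_value. reflexivity.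
  - intros i y. apply sig_ext, sig_ext. transitivity (nop (stage s) i (proj1_sig y)).
    + rewrite gen_nstruct_elt_value. exact (to_struct_op _ _ gen_nstruct_closed).
    + rewrite <- (gen_nstruct_elt_value y) at 1. symmetry. exact (limit_op_value _ _ _ (Hin y)).
  - intros x.
    exists (exist _ _ (ex_intro _ (proj1_sig x) (conj eq_refl (proj2_sig x)))).
    apply sig_ext, sig_ext. apply gen_nstruct_elt_value.
Qed.

End GeneratedSubstructure.

Arguments gen_nstruct_extends {l s} Hls.
Arguments gen_nstruct_closed {l s} Hls.
Arguments gen_nstruct_finite {l s} Hls.
Arguments gen_nstruct_elt_value {l s} y.
Arguments gen_nstruct_elt_iso {l s} Hls.

Lemma gen_struct_K_finite (l : list limit) : K (gen_struct l) /\ finite_type (gen_struct l).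
Proof.
  destruct (stage_common l) as [s Hs].
  pose proof (gen_nstruct_elt_iso Hs) as Hk.
  destruct (isomorphism_inv Hk) as [g Hg].
  destruct (nextends_embedding (gen_nstruct_closed Hs) (gen_nstruct_extends Hs)) as [h [Hh _]].
  split.
  - apply (K_hereditary (embedding_comp Hg Hh)), stage_admissible.
  - exact (finite_of_surjection _ (proj2 Hk) (to_struct_finite (gen_nstruct_finite Hs))).
Qed.

Lemma applicable_of_extension (c a b : nstruct I) (t : task) :
  admissible c -> nclosed a -> nextends a c -> (forall x, In x (task_kept t) <-> ndom a x) ->
  admissible b -> nextends a b -> nextends b (task_struct t) -> nextends (task_struct t) b ->
  applicable c t.
Proof.
  intros Hc Ha Hac Hkept Hb Hab Hbt Htb.
  pose proof (nextends_trans Hab Hbt) as Hat.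
  split; [exact Hc|split; [split; [|split]|]].
  - exact (admissible_equiv Hb Hbt Htb).
  - exact (nrestrict_closed _ Hkept Hat Ha).
  - intros x Hx. apply Hat, Hkept, Hx.
  - exact (nrestrict_extends_to _ Hkept Hat Hac).
Qed.

Lemma extension_property (l : list limit) (B : struct I) (e : gen_struct l -> B) :
  K B -> finite_type B -> embedding e ->
  exists h : B -> limit, embedding h /\ forall x, h (e x) = proj1_sig x.
Proof.
  intros HKB HBfin He.
  destruct (stage_common l) as [s0 Hs].
  pose proof (gen_nstruct_elt_iso Hs) as Hk.
  pose proof (gen_nstruct_finite Hs) as [S HS].
  destruct (recode (gen_nstruct_closed Hs) (gen_nstruct_finite Hs) HBfin
                   (embedding_comp (proj1 Hk) He)) as [b [j [Hb [[LB HLB] [Hab [Hj Hjv]]]]]].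
  destruct (task_of_nstruct b S LB HLB) as [t [Ht [Hbt Htb]]].
  assert (Happ : applicable (stage s0) t).
  { apply (@applicable_of_extension (stage s0) (gen_nstruct l s0) b t); auto.
    - apply stage_admissible.
    - apply (gen_nstruct_closed Hs).
    - apply (gen_nstruct_extends Hs).
    - intro x. rewrite Ht, HS. reflexivity.
    - exact (admissible_of_iso Hb (ex_intro _ LB HLB) HKB Hj). }
  destruct (task_eventually_realized _ Happ) as [s [h' [Hh' Hh'v]]].
  destruct (nextends_embedding Hb Hbt) as [psi [Hpsi Hpsiv]].
  exists (fun y => stage_inclusion s (h' (psi (j y)))). split.
  - apply (embedding_comp (embedding_comp (embedding_comp (proj1 Hj) Hpsi) Hh')).
    apply stage_inclusion_embedding.
  - intro x. destruct (proj2 Hk x) as [y <-]. apply sig_ext. simpl.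
    rewrite Hh'v, Hpsiv, Hjv.
    + symmetry. apply gen_nstruct_elt_value.
    + rewrite Hpsiv, Hjv, Ht. apply HS, proj2_sig.
Qed.

(** * Back and forth *)

Record partial_iso (G : limit -> limit -> Prop) : Prop := {
  piso_fun : forall x y y', G x y -> G x y' -> y = y';
  piso_inj : forall x x' y, G x y -> G x' y -> x = x';
  piso_op : forall i x y, G x y -> G (op limit i x) (op limit i y);
  piso_rel : forall x y x' y', G x y -> G x' y' -> (rel limit x x' <-> rel limit y y');
  piso_dom_finite : exists L, forall x y, G x y -> In x L;
  piso_ran_finite : exists L, forall x y, G x y -> In y L }.

Arguments piso_fun {G} _ {x y y'}.
Arguments piso_inj {G} _ {x x' y}.
Arguments piso_op {G} _ i {x y}.
Arguments piso_rel {G} _ {x y x' y'}.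

Definition flip_rel (G : limit -> limit -> Prop) (x y : limit) : Prop := G y x.

Lemma partial_iso_flip G : partial_iso G -> partial_iso (flip_rel G).
Proof.
  intros [Hf Hi Ho Hr [L1 H1] [L2 H2]]. unfold flip_rel.
  split; eauto.
  intros x y x' y' A1 A2. rewrite (Hr _ _ _ _ A1 A2). reflexivity.
Qed.

Definition emb_graph (l : list limit) (h : gen_struct l -> limit) (x y : limit) : Prop :=
  exists p : generated l x, h (exist _ x p) = y.

Lemma emb_graph_partial_iso l (h : gen_struct l -> limit) :
  embedding h -> partial_iso (emb_graph h).
Proof.
  intros Hh. destruct (proj2 (gen_struct_K_finite l)) as [L HL].
  split.
  - intros x y y' [p <-] [p' <-]. rewrite (proof_irrelevance _ p p'). reflexivity.
  - intros x x' y [p Hp] [p' Hp']. rewrite <- Hp' in Hp.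
    exact (f_equal (@proj1_sig _ _) (embedding_inj Hh Hp)).
  - intros i x y [p <-]. exists (generated_closed i p).
    exact (embedding_op Hh i (exist _ x p)).
  - intros x y x' y' [p <-] [p' <-]. exact (embedding_rel Hh (exist _ x p) (exist _ x' p')).
  - exists (map (@proj1_sig _ _) L). intros x y [p _].
    apply (in_map (@proj1_sig _ _) L (exist _ x p)), HL.
  - exists (map h L). intros x y [p <-]. apply in_map, HL.
Qed.

Lemma partial_iso_range_generated G : partial_iso G ->
  exists l, forall y, generated l y <-> exists x, G x y.
Proof.
  intros HG. destruct (piso_ran_finite HG) as [L HL].
  set (ran := filter (fun y => if EM (exists x, G x y) then true else false) L).
  exists ran.
  assert (Hin : forall y, In y ran <-> exists x, G x y).
  { intro y. unfold ran. rewrite filter_In. destruct (EM _) as [H|H]; [|intuition discriminate].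
    destruct H as [x Hx]. split; [eauto|]. intros _. split; [exact (HL _ _ Hx)|reflexivity]. }
  intro y. split.
  - intro Hy. apply (Hy (fun y => exists x, G x y)); [|intros z Hz; apply Hin, Hz].
    intros i z [x Hx]. exists (op limit i x). apply (piso_op HG), Hx.
  - intro Hy. apply generated_In, Hin, Hy.
Qed.

Lemma partial_iso_inverse G l1 l2 : partial_iso G ->
  (forall x y, G x y -> generated l1 x) -> (forall y, generated l2 y -> exists x, G x y) ->
  exists e : gen_struct l2 -> gen_struct l1,
    embedding e /\ forall r, G (proj1_sig (e r)) (proj1_sig r).
Proof.
  intros HG Hl1 Hl2.
  pose (pre := fun r : gen_struct l2 => choose (Hl2 _ (proj2_sig r))).
  assert (Hpre : forall r, G (pre r) (proj1_sig r))
    by (intro r; exact (choose_spec (Hl2 _ (proj2_sig r)))).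
  exists (fun r => exist _ (pre r) (Hl1 _ _ (Hpre r))). split; [split; [|split]|exact Hpre].
  - intros r r' E. apply sig_ext. apply (piso_fun HG (Hpre r)).
    assert (Ep : pre r = pre r') by exact (f_equal (@proj1_sig _ _) E).
    rewrite Ep. apply Hpre.
  - intros r r'. symmetry. exact (piso_rel HG (Hpre r) (Hpre r')).
  - intros i r. apply sig_ext.
    exact (piso_inj HG (Hpre (op (gen_struct l2) i r)) (piso_op HG i (Hpre r))).
Qed.

Lemma partial_iso_forth G x : partial_iso G ->
  exists G', partial_iso G' /\ (forall a b, G a b -> G' a b) /\ exists y, G' x y.
Proof.
  intros HG. destruct (piso_dom_finite HG) as [L1 HL1].
  destruct (partial_iso_range_generated HG) as [l2 Hl2].
  destruct (gen_struct_K_finite (x :: L1)) as [HK Hfin].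
  destruct (@partial_iso_inverse G (x :: L1) l2 HG) as [e [He Hev]].
  { intros a b Hab. apply generated_In, in_cons, (HL1 _ _ Hab). }
  { intros b Hb. apply Hl2, Hb. }
  destruct (extension_property HK Hfin He) as [h [Hh Hhe]].
  exists (emb_graph h). split; [exact (emb_graph_partial_iso Hh)|split].
  - intros a b Hab. pose (r := exist _ b (proj2 (Hl2 b) (ex_intro _ a Hab)) : gen_struct l2).
    assert (Ea : proj1_sig (e r) = a) by exact (piso_inj HG (Hev r) Hab).
    destruct (e r) as [a' p] eqn:Er. simpl in Ea. subst a'.
    exists p. transitivity (h (e r)); [rewrite Er; reflexivity|exact (Hhe r)].
  - exists (h (exist _ x (generated_In (in_eq x L1)))), (generated_In (in_eq x L1)). reflexivity.
Qed.

Lemma partial_iso_extend G x : partial_iso G ->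
  exists G', partial_iso G' /\ (forall a b, G a b -> G' a b) /\
    (exists y, G' x y) /\ (exists y, G' y x).
Proof.
  intros HG. destruct (partial_iso_forth x HG) as [G1 [HG1 [HGG1 Hx1]]].
  destruct (partial_iso_forth x (partial_iso_flip HG1)) as [G2 [HG2 [HG12 Hx2]]].
  exists (flip_rel G2). split; [exact (partial_iso_flip HG2)|split; [|split]].
  - intros a b Hab. apply HG12, HGG1, Hab.
  - destruct Hx1 as [y Hy]. exists y. apply HG12, Hy.
  - exact Hx2.
Qed.

Definition extend (G : limit -> limit -> Prop) (x : limit) : limit -> limit -> Prop :=
  match EM (partial_iso G) with
  | left H => choose (partial_iso_extend x H)
  | right _ => G
  end.

Lemma extend_spec G x : partial_iso G ->
  partial_iso (extend G x) /\ (forall a b, G a b -> extend G x a b) /\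
  (exists y, extend G x x y) /\ (exists y, extend G x y x).
Proof.
  intros HG. unfold extend. destruct (EM _) as [H|H]; [|contradiction].
  exact (choose_spec (partial_iso_extend x H)).
Qed.

Definition limit_enum (n : nat) : option limit :=
  match EM (in_limit n) with left p => Some (exist _ n p) | right _ => None end.

Lemma limit_enum_spec (x : limit) : limit_enum (proj1_sig x) = Some x.
Proof.
  destruct x as [n p]. unfold limit_enum. simpl. destruct (EM (in_limit n)) as [q|q].
  - rewrite (proof_irrelevance _ p q). reflexivity.
  - contradiction.
Qed.

Section BackAndForth.
Variable G0 : limit -> limit -> Prop.
Hypothesis HG0 : partial_iso G0.

Fixpoint chain (k : nat) : limit -> limit -> Prop :=
  match k with
  | 0 => G0
  | S k' => match limit_enum k' with Some x => extend (chain k') x | None => chain k' end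
  end.

Lemma chain_partial_iso k : partial_iso (chain k).
Proof.
  induction k as [|k IH]; [exact HG0|]. simpl.
  destruct (limit_enum k) as [x|]; [apply extend_spec, IH|exact IH].
Qed.

Lemma chain_mono k k' : k <= k' -> forall a b, chain k a b -> chain k' a b.
Proof.
  induction 1 as [|k' _ IH]; [auto|]. intros a b Hab. simpl.
  destruct (limit_enum k') as [x|]; [apply extend_spec, IH, Hab|apply IH, Hab].
  apply chain_partial_iso.
Qed.

Lemma chain_covers x :
  (exists y, chain (S (proj1_sig x)) x y) /\ (exists y, chain (S (proj1_sig x)) y x).
Proof.
  simpl. rewrite limit_enum_spec. apply extend_spec, chain_partial_iso.
Qed.

Definition chain_union (a b : limit) : Prop := exists k, chain k a b.

Lemma chain_union_common a b a' b' : chain_union a b -> chain_union a' b' ->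
  exists k, chain k a b /\ chain k a' b'.
Proof.
  intros [k1 H1] [k2 H2]. exists (Nat.max k1 k2).
  split; [exact (chain_mono (Nat.le_max_l k1 k2) _ _ H1)|].
  exact (chain_mono (Nat.le_max_r k1 k2) _ _ H2).
Qed.

Lemma chain_union_total x : exists y, chain_union x y.
Proof. destruct (proj1 (chain_covers x)) as [y Hy]. exists y, (S (proj1_sig x)). exact Hy. Qed.

Definition bf_map (x : limit) : limit := choose (chain_union_total x).

Lemma bf_map_spec x : chain_union x (bf_map x).
Proof. exact (choose_spec (chain_union_total x)). Qed.

Lemma bf_map_graph x y : chain_union x y -> bf_map x = y.
Proof.
  intros Hxy. destruct (chain_union_common (bf_map_spec x) Hxy) as [k [H1 H2]].
  exact (piso_fun (chain_partial_iso k) H1 H2).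
Qed.

Lemma bf_map_iso : isomorphism bf_map.
Proof.
  split; [split; [|split]|].
  - intros x x' E. destruct (chain_union_common (bf_map_spec x) (bf_map_spec x')) as [k [H1 H2]].
    rewrite E in H1. exact (piso_inj (chain_partial_iso k) H1 H2).
  - intros x x'. destruct (chain_union_common (bf_map_spec x) (bf_map_spec x')) as [k [H1 H2]].
    exact (piso_rel (chain_partial_iso k) H1 H2).
  - intros i x. apply bf_map_graph. destruct (bf_map_spec x) as [k Hk].
    exists k. apply (piso_op (chain_partial_iso k)), Hk.
  - intros y. destruct (proj2 (chain_covers y)) as [x Hx]. exists x.
    apply bf_map_graph. exists (S (proj1_sig y)). exact Hx.
Qed.

End BackAndForth.

Lemma back_and_forth G0 : partial_iso G0 ->
  exists sigma : limit -> limit, isomorphism sigma /\ forall a b, G0 a b -> sigma a = b.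
Proof.
  intros HG0. exists (bf_map HG0). split; [exact (bf_map_iso HG0)|].
  intros a b Hab. apply bf_map_graph. exists 0. exact Hab.
Qed.

Lemma limit_ultrahomogeneous : ultrahomogeneous limit.
Proof.
  intros l1 l2 phi Hphi.
  pose (h := fun x => proj1_sig (phi x)).
  assert (Hh : embedding h) by exact (embedding_comp (proj1 Hphi) (gen_struct_incl_embedding l2)).
  destruct (back_and_forth (emb_graph_partial_iso Hh)) as [sigma [Hsigma Hext]].
  exists sigma. split; [exact Hsigma|].
  intros [x p]. apply Hext. exists p. reflexivity.
Qed.

Theorem fraisse_limit_exists : exists M, fraisse_limit (finite_members K) M.
Proof.
  exists limit. split; [|split; [exact limit_ultrahomogeneous|split]].
  - exists (@proj1_sig _ _). intros x y. apply sig_ext.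
  - intros l. exists (gen_struct l). split; [exact (gen_struct_K_finite l)|].
    exists (fun x => x). split; [split; [|split]|]; eauto; reflexivity.
  - intros A [HKA HAfin].
    assert (Hnil : gen_struct ([] : list limit) -> False).
    { intros [x Hx]. exact (Hx (fun _ => False) (fun _ _ H => H) (fun _ H => H)). }
    pose (e := fun x => match Hnil x return A with end).
    assert (He : embedding e) by (split; [|split]; intros; destruct (Hnil x)).
    destruct (extension_property HKA HAfin He) as [h [Hh _]]. exists h. exact Hh.
Qed.

End Fraisse.

(** * The classes of the theorem *)

Definition composes (k : relkind) : bool :=
  match k with Poset | Preorder | Equivalence | TransRel => true | _ => false end.

Lemma class1_transitive k F G (A : struct (F + G)) :
  class1 k F G A -> composes k = true -> transitive _ (rel A).
Proof. intros [H _] Hk. destruct k; simpl in *; try discriminate; firstorder. Qed.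

Ltac split_conj := repeat match goal with H : _ /\ _ |- _ => destruct H end.
Ltac from_hyps :=
  first [ assumption | reflexivity | intros _; assumption
        | match goal with H : forall _, _ |- _ => exact (H _) end ].

Lemma class1_amalg k F G (A B C : struct (F + G)) (eA : C -> A) (eB : C -> B) :
  embedding eA -> embedding eB -> class1 k F G A -> class1 k F G B ->
  class1 k F G (amalg eA eB (composes k)).
Proof.
  intros HeA HeB KA KB.
  pose proof (class1_transitive KA) as TA. pose proof (class1_transitive KB) as TB.
  destruct KA as [RA [PA QA]], KB as [RB [PB QB]].
  split; [|split].
  - destruct k; simpl in RA, RB, TA, TB |- *; split_conj; repeat split;
      first [ apply amalg_reflexive | apply amalg_irreflexive | apply amalg_symmetric
            | apply amalg_transitive | apply amalg_antisymmetric ]; from_hyps.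
  - intro f. apply amalg_preserving; from_hyps.
  - intro g. apply amalg_reversing; from_hyps.
Qed.

Lemma class2_amalg F1 F2 F3 F4 (A B C : struct (((F1 + F2) + F3) + F4))
  (eA : C -> A) (eB : C -> B) :
  embedding eA -> embedding eB -> class2 F1 F2 F3 F4 A -> class2 F1 F2 F3 F4 B ->
  class2 F1 F2 F3 F4 (amalg eA eB true).
Proof.
  intros HeA HeB [[RA [AA TA]] [P1A [P2A [P3A P4A]]]] [[RB [AB TB]] [P1B [P2B [P3B P4B]]]].
  split; [split; [|split]|split; [|split; [|split]]].
  - apply amalg_reflexive; from_hyps.
  - apply amalg_antisymmetric; from_hyps.
  - apply amalg_transitive; from_hyps.
  - intro f. apply amalg_preserving; from_hyps.
  - intro f. apply amalg_reversing; from_hyps.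
  - intro f. apply amalg_strict_preserving; from_hyps.
  - intro f. apply amalg_strict_reversing; from_hyps.
Qed.

Lemma class1_hereditary k F G : hereditary (class1 k F G).
Proof.
  intros A B h Hh [RB [PB QB]]. split; [|split].
  - destruct k; simpl in RB |- *; split_conj; repeat split;
      first [ eapply reflexive_embedding | eapply irreflexive_embedding
            | eapply symmetric_embedding | eapply transitive_embedding
            | eapply antisymmetric_embedding ]; eassumption.
  - intro f. exact (preserving_embedding Hh _ (PB f)).
  - intro g. exact (reversing_embedding Hh _ (QB g)).
Qed.

Lemma class2_hereditary F1 F2 F3 F4 : hereditary (class2 F1 F2 F3 F4).
Proof.
  intros A B h Hh [[R1 [R2 R3]] [P1 [P2 [P3 P4]]]].
  split; [split; [|split]|split; [|split; [|split]]].
  - exact (reflexive_embedding Hh R1).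
  - exact (antisymmetric_embedding Hh R2).
  - exact (transitive_embedding Hh R3).
  - intro f. exact (preserving_embedding Hh _ (P1 f)).
  - intro f. exact (reversing_embedding Hh _ (P2 f)).
  - intro f. exact (strict_preserving_embedding Hh _ (P3 f)).
  - intro f. exact (strict_reversing_embedding Hh _ (P4 f)).
Qed.

Lemma class1_empty k F G : class1 k F G (empty_struct (F + G)).
Proof.
  destruct k; repeat split; hnf; intros; match goal with x : _ |- _ => solve [destruct x] end.
Qed.

Lemma class2_empty F1 F2 F3 F4 : class2 F1 F2 F3 F4 (empty_struct _).
Proof. repeat split; intros; match goal with x : _ |- _ => solve [destruct x] end. Qed.

Lemma class1_superSAP k F G : superSAP (class1 k F G).
Proof.
  apply (@superSAP_of_amalg _ _ (composes k)).
  - intros A KA. exact (class1_transitive KA).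
  - intros A B C eA eB HeA HeB. exact (class1_amalg HeA HeB).
Qed.

Lemma class1_finite_amalgamation k F G : finite_amalgamation (class1 k F G).
Proof.
  apply (@finite_amalgamation_of_amalg _ _ (composes k)).
  - intros A KA. exact (class1_transitive KA).
  - intros A B C eA eB HeA HeB. exact (class1_amalg HeA HeB).
Qed.

Lemma class2_transitive F1 F2 F3 F4 A : class2 F1 F2 F3 F4 A -> true = true -> transitive _ (rel A).
Proof. intros [[_ [_ T]] _] _. exact T. Qed.

Lemma class2_superSAP F1 F2 F3 F4 : superSAP (class2 F1 F2 F3 F4).
Proof.
  apply (@superSAP_of_amalg _ _ true).
  - apply class2_transitive.
  - intros A B C eA eB HeA HeB. exact (class2_amalg HeA HeB).
Qed.

Lemma class2_finite_amalgamation F1 F2 F3 F4 : finite_amalgamation (class2 F1 F2 F3 F4).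
Proof.
  apply (@finite_amalgamation_of_amalg _ _ true).
  - apply class2_transitive.
  - intros A B C eA eB HeA HeB. exact (class2_amalg HeA HeB).
Qed.

Lemma class1_JEP k F G : JEP (class1 k F G).
Proof. exact (JEP_of_superSAP (@class1_superSAP k F G) (class1_empty k F G)). Qed.

Lemma class2_JEP F1 F2 F3 F4 : JEP (class2 F1 F2 F3 F4).
Proof. exact (JEP_of_superSAP (@class2_superSAP F1 F2 F3 F4) (class2_empty F1 F2 F3 F4)). Qed.

Theorem corollary2p3 :
  (forall (k : relkind) (F G : Type),
     superSAP (class1 k F G) /\ JEP (class1 k F G) /\
     (finite_type F -> finite_type G ->
        exists M, fraisse_limit (finite_members (class1 k F G)) M)) /\
  (forall F1 F2 F3 F4 : Type,
     superSAP (class2 F1 F2 F3 F4) /\ JEP (class2 F1 F2 F3 F4) /\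
     (finite_type F1 -> finite_type F2 -> finite_type F3 -> finite_type F4 ->
        exists M, fraisse_limit (finite_members (class2 F1 F2 F3 F4)) M)).
Proof.
  split.
  - intros k F G. split; [apply class1_superSAP|split].
    + apply class1_JEP.
    + intros HF HG. apply fraisse_limit_exists.
      * exact (finite_sum HF HG).
      * apply class1_hereditary.
      * apply class1_finite_amalgamation.
      * apply class1_empty.
  - intros F1 F2 F3 F4. split; [apply class2_superSAP|split].
    + apply class2_JEP.
    + intros H1 H2 H3 H4. apply fraisse_limit_exists.
      * exact (finite_sum (finite_sum (finite_sum H1 H2) H3) H4).
      * apply class2_hereditary.
      * apply class2_finite_amalgamation.
      * apply class2_empty.
Qed.
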